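(* There is a family of instances, one for each number of jobs $n$, for which $\frac{OPT_{\mathrm{SR}}}{OPT}=\Omega(n)$, where $OPT$ is the optimal objective value of problem MR and $OPT_{\mathrm{SR}}$ is the optimal objective value of MR restricted to the Smith Rule order.
   Context: Problem MR. There are jobs $\mathcal J=\{1,\dots,n\}$ and processors $\mathcal P=\{1,\dots,m\}$. Job $j$ has weight $w_j>0$, release date $r_j\ge0$, and a set of Map tasks and a set of Reduce tasks, preassigned to processors with at most one task of each job per processor; $T_{i,j}$ is the task of job $j$ on processor $i$, with work $v_{i,j}\ge0$. A schedule gives each task a start time and a constant speed $s_{i,j}>0$; the task runs non-preemptively for $v_{i,j}/s_{i,j}$ time units and uses energy $v_{i,j}s_{i,j}^{\beta-1}$, where $\beta>1$ is a fixed constant. Feasibility: each processor runs at most one task at a time; tasks of job $j$ start no earlier than $r_j$; Reduce tasks of job $j$ start only after all Map tasks of job $j$ complete; total energy at most a given budget $E>0$. $C_j$ is the maximum completion time of the tasks of job $j$; the objective is to minimize $\sum_j w_jC_j$. Given an order $\sigma$ of the jobs, MR restricted to $\sigma$ is MR with the additional requirement that on every processor the tasks are executed in the order $\sigma$ of their jobs (the same order for all processors). The Smith Rule order is any order $\sigma$ such that $\frac{w_j}{\sum_{i}v_{i,j}}>\frac{w_{j'}}{\sum_i v_{i,j'}}$ implies $j$ precedes $j'$. *)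

From HB Require Import structures.
From mathcomp Require Import all_boot all_order all_algebra all_fingroup.
From mathcomp Require Import all_classical all_reals all_analysis.
Set Implicit Arguments. Unset Strict Implicit. Unset Printing Implicit Defensive.
Import Order.TTheory GRing.Theory Num.Theory.
Local Open Scope classical_set_scope.
Local Open Scope ring_scope.

Inductive task_kind := MapTask | ReduceTask.


(* An instance of MR with n jobs.  kind i j = Some k iff job j has a task
   (of kind k) on processor i; at most one task per (processor, job). *)
Record instance (R : realType) (n : nat) := Instance {
  nproc : nat;
  weight : 'I_n -> R;
  release : 'I_n -> R;
  kind : 'I_nproc -> 'I_n -> option task_kind;
  work : 'I_nproc -> 'I_n -> R;
  budget : R }.

Arguments nproc {R n} _.
Arguments weight {R n} _ _.
Arguments release {R n} _ _.
Arguments kind {R n} _ _ _.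
Arguments work {R n} _ _ _.
Arguments budget {R n} _.

Section MR.
Variables (R : realType) (n : nat) (beta : R) (I : instance R n).

Definition has_task (i : 'I_(nproc I)) (j : 'I_n) : bool :=
  if kind I i j is Some _ then true else false.
Definition is_map (i : 'I_(nproc I)) (j : 'I_n) : bool :=
  if kind I i j is Some MapTask then true else false.
Definition is_reduce (i : 'I_(nproc I)) (j : 'I_n) : bool :=
  if kind I i j is Some ReduceTask then true else false.

Definition total_work (j : 'I_n) : R := \sum_(i | has_task i j) work I i j.

(* Validity of an instance: w_j > 0, r_j >= 0, v_{i,j} >= 0, E > 0, and
   every job has positive total work (so the Smith ratio is well defined). *)
Definition valid_instance : Prop :=
  [/\ forall j, 0 < weight I j,
      forall j, 0 <= release I j,
      forall i j, has_task i j -> 0 <= work I i j,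
      forall j, 0 < total_work j
    & 0 < budget I].

Record schedule := Schedule {
  start : 'I_(nproc I) -> 'I_n -> R;
  speed : 'I_(nproc I) -> 'I_n -> R }.

Definition completion (S : schedule) i j : R := start S i j + work I i j / speed S i j.

Definition energy (S : schedule) : R :=
  \sum_(i < nproc I) \sum_(j | has_task i j) work I i j * (speed S i j) `^ (beta - 1).

Definition feasible (S : schedule) : Prop :=
  [/\ (forall i j, has_task i j -> 0 < speed S i j),
      (forall i j j', j != j' -> has_task i j -> has_task i j' ->
          completion S i j <= start S i j' \/ completion S i j' <= start S i j),
      (forall i j, has_task i j -> release I j <= start S i j),
      (forall i i' j, is_reduce i j -> is_map i' j -> completion S i' j <= start S i j)
    & energy S <= budget I].

Definition job_completion (S : schedule) (j : 'I_n) : R :=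
  \big[Order.max/0]_(i | has_task i j) completion S i j.

Definition objective (S : schedule) : R := \sum_j weight I j * job_completion S j.

(* An order of the jobs: sigma j is the position of job j. *)
Definition respects_order (sigma : {perm 'I_n}) (S : schedule) : Prop :=
  forall i j j', has_task i j -> has_task i j' -> (sigma j < sigma j')%N ->
    completion S i j <= start S i j'.

Definition OPT : R := inf [set objective S | S in [set S | feasible S]].

Definition OPT_restricted (sigma : {perm 'I_n}) : R :=
  inf [set objective S | S in [set S | feasible S /\ respects_order sigma S]].

Definition smith_order (sigma : {perm 'I_n}) : Prop :=
  forall j j', weight I j' / total_work j' < weight I j / total_work j ->
    (sigma j < sigma j')%N.

End MR.

From HB Require Import structures.
From mathcomp Require Import all_boot all_order all_algebra all_fingroup.
From mathcomp Require Import all_classical all_reals all_analysis.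
From mathcomp Require Import ring lra.
Import Order.TTheory GRing.Theory Num.Theory.
Local Open Scope ring_scope.

(* Take n processors and n unit-weight jobs.  Job 0, the split job, is
   released at time n and consists of n Map tasks of work 1/(2n), one on
   every processor; each other job j is a single task of work 1 on
   processor j, released at 0.  The split job has Smith ratio 2 and the
   others ratio 1, so in the Smith order it runs first on every processor:
   no job completes before time n and OPT_SR >= n^2.  Running the unit jobs
   in [0, 1] and the split job at time n instead costs at most 2n + 1, so
   n <= OPT <= 2n + 1.  Both witness schedules run at unit speed, whose
   energy is the total work whatever beta is. *)

Section ScheduleBounds.
Set Implicit Arguments. Unset Strict Implicit.
Variables (R : realType) (n : nat) (beta : R) (I : instance R n).

Lemma job_completion_ge0 (S : schedule I) j : 0 <= job_completion S j.
Proof. exact: bigmax_ge_id. Qed.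

Lemma start_le_completion (S : schedule I) i j :
  0 <= work I i j -> 0 < speed S i j -> start S i j <= completion S i j.
Proof. by move=> w_ge0 s_gt0; rewrite /completion lerDl divr_ge0 // ltW. Qed.

Lemma start_le_job_completion (S : schedule I) i j :
  has_task i j -> 0 <= work I i j -> 0 < speed S i j ->
  start S i j <= job_completion S j.
Proof.
by move=> hij w_ge0 s_gt0; apply: (bigmax_sup i) => //; exact: start_le_completion.
Qed.

Lemma job_completion_le (S : schedule I) j x : 0 <= x ->
  (forall i, has_task i j -> completion S i j <= x) -> job_completion S j <= x.
Proof. exact: bigmax_le. Qed.

Lemma weighted_completion_ge0 (S : schedule I) j :
  valid_instance I -> 0 <= weight I j * job_completion S j.
Proof. by case=> w_gt0 _ _ _ _; rewrite mulr_ge0 ?job_completion_ge0 ?ltW. Qed.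

Lemma weighted_completion_le_objective (S : schedule I) j :
  valid_instance I -> weight I j * job_completion S j <= objective S.
Proof.
move=> vI; rewrite /objective (bigD1 j) //= lerDl.
by apply: sumr_ge0 => k _; exact: weighted_completion_ge0.
Qed.

Lemma objective_unit_weight_ge (S : schedule I) x :
  (forall j, weight I j = 1) -> (forall j, x <= job_completion S j) ->
  n%:R * x <= objective S.
Proof.
move=> w1 lb; rewrite mulr_natl -[n in x *+ n]card_ord -sumr_const.
by apply: ler_sum => j _; rewrite w1 mul1r.
Qed.

Lemma energy_unit_speed (S : schedule I) : (forall i j, speed S i j = 1) ->
  energy beta S = \sum_(i < nproc I) \sum_(j | has_task i j) work I i j.
Proof.
by move=> s1; apply: eq_bigr => i _; apply: eq_bigr => j _; rewrite s1 powR1 mulr1.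
Qed.

Lemma OPT_le_objective (S : schedule I) :
  valid_instance I -> feasible beta S -> OPT beta I <= objective S.
Proof.
move=> vI fS; apply: ge_inf; last by exists S.
by exists 0 => _ [T _ <-]; apply: sumr_ge0 => j _; exact: weighted_completion_ge0.
Qed.

Lemma le_OPT (S : schedule I) x : feasible beta S ->
  (forall T : schedule I, feasible beta T -> x <= objective T) -> x <= OPT beta I.
Proof.
move=> fS lb; apply: lb_le_inf; first by exists (objective S), S.
by move=> _ [T fT <-]; exact: lb.
Qed.

Lemma le_OPT_restricted sigma (S : schedule I) x :
  feasible beta S -> respects_order sigma S ->
  (forall T : schedule I, feasible beta T -> respects_order sigma T -> x <= objective T) ->
  x <= OPT_restricted beta I sigma.
Proof.
move=> fS oS lb; apply: lb_le_inf; first by exists (objective S), S.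
by move=> _ [T [fT oT] <-]; exact: lb.
Qed.

End ScheduleBounds.

Definition gap_task (n : nat) (i j : 'I_n) : bool := (val j == 0%N) || (i == j).

Definition gap_work (R : realType) (n : nat) (i j : 'I_n) : R :=
  if val j == 0%N then (2 * n%:R)^-1 else 1.

Arguments gap_task {n} i j.
Arguments gap_work R {n} i j.

(* The budget 1 + (total work) pays for every unit-speed schedule. *)
Definition smith_gap_instance (R : realType) (n : nat) : instance R n :=
  @Instance R n n (fun _ => 1) (fun j => if val j == 0%N then n%:R else 0)
    (fun i j => if gap_task i j then Some MapTask else None) (gap_work R)
    (1 + \sum_(i < n) \sum_(j | gap_task i j) gap_work R i j).

Section SmithGap.
Set Implicit Arguments. Unset Strict Implicit.
Variables (R : realType) (n : nat) (beta : R).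
Hypothesis n_gt0 : (0 < n)%N.
Local Notation I := (smith_gap_instance R n).
Local Notation split_job := (Ordinal n_gt0).
Local Notation w0 := ((2 * n%:R)^-1 : R).

Lemma split_jobE (j : 'I_n) : (val j == 0%N) = (j == split_job).
Proof. by []. Qed.

Lemma has_task_gap i j : @has_task R n I i j = (j == split_job) || (i == j).
Proof. by rewrite /has_task /= /gap_task split_jobE; case: ifP. Qed.

Lemma is_reduce_gap i j : @is_reduce R n I i j = false.
Proof. by rewrite /is_reduce /=; case: ifP. Qed.

Lemma work_gap i j : work I i j = if j == split_job then w0 else 1.
Proof. by rewrite /= /gap_work split_jobE. Qed.

Lemma w0_gt0 : 0 < w0.
Proof. by rewrite invr_gt0 mulr_gt0 // ltr0n. Qed.

Lemma w0_le1 : w0 <= 1.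
Proof. by rewrite invf_le1 ?mulr_gt0 ?ltr0n // -natrM ler1n muln_gt0. Qed.

Lemma work_gap_ge0 i j : 0 <= work I i j.
Proof. by rewrite work_gap; case: ifP => _; rewrite ?ltW ?w0_gt0. Qed.

Lemma total_work_gap j : total_work I j = if j == split_job then 2^-1 else 1.
Proof.
rewrite /total_work (eq_bigl _ _ (has_task_gap^~ j)).
rewrite (eq_bigr (fun _ => if j == split_job then w0 else 1)) => [/=|i _]; last first.
  exact: work_gap.
have [->|hj] := eqVneq j split_job.
  rewrite (eq_bigl xpredT) // sumr_const card_ord -mulr_natr; field.
  by rewrite lt0r_neq0 // ltr0n.
by rewrite (eq_bigl (pred1 j)) ?big_pred1_eq // => i; rewrite /= eq_sym.
Qed.

Lemma valid_gap : valid_instance I.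
Proof.
split => //= [j|i j _|j|].
- by case: ifP.
- exact: work_gap_ge0.
- by rewrite total_work_gap; case: ifP.
- by rewrite ltr_pwDl // sumr_ge0 // => i _; rewrite sumr_ge0 // => j _; exact: work_gap_ge0.
Qed.

Definition phase_schedule (a b : R) : schedule I :=
  Schedule (fun _ j => if j == split_job then a else b) (fun _ _ => 1).

Lemma completion_phase a b i j :
  completion (phase_schedule a b) i j = if j == split_job then a + w0 else b + 1.
Proof. by rewrite /completion work_gap /= divr1; case: ifP. Qed.

Lemma feasible_phase (a b : R) : n%:R <= a -> 0 <= b ->
  b + 1 <= a \/ a + w0 <= b -> feasible beta (phase_schedule a b).
Proof.
move=> ha hb hab; split => // [i j j'|i j|i i' j|].
- rewrite !has_task_gap !completion_phase /=.
  have [->|hj] := eqVneq j split_job; have [->|hj'] := eqVneq j' split_job => /=.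
  + by [].
  + by move=> _ _ _; case: hab; [right|left].
  + by move=> _ _ _; case: hab; [left|right].
  + by move=> jj' /eqP ij /eqP ij'; rewrite -ij ij' eqxx in jj'.
- by rewrite /= split_jobE; case: ifP.
- by rewrite is_reduce_gap.
- rewrite energy_unit_speed // ler_wpDl // ler_sum // => i _.
  by rewrite (eq_bigl (gap_task i)) // => j; rewrite /has_task /=; case: ifP.
Qed.

Lemma release_gap j : release I j = if j == split_job then n%:R else 0.
Proof. by rewrite /= split_jobE. Qed.

Lemma le_job_completion_split (T : schedule I) : feasible beta T ->
  n%:R <= job_completion T split_job.
Proof.
move=> [s_gt0 _ rel _ _].
have hs : @has_task R n I split_job split_job by rewrite has_task_gap eqxx.
apply: (le_trans _ (start_le_job_completion hs (work_gap_ge0 _ _) (s_gt0 _ _ hs))).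
by have := rel _ _ hs; rewrite release_gap eqxx.
Qed.

Lemma OPT_gap_bounds : n%:R <= OPT beta I <= 2 * n%:R + 1.
Proof.
have fS : feasible beta (phase_schedule n%:R 0).
  by apply: feasible_phase => //; left; rewrite add0r ler1n.
apply/andP; split.
  apply: (le_OPT fS) => T fT; apply: (le_trans (le_job_completion_split fT)).
  by have := weighted_completion_le_objective T split_job valid_gap; rewrite mul1r.
apply: (le_trans (OPT_le_objective valid_gap fS)).
rewrite /objective (bigD1 split_job) //= mul1r.
have -> : 2 * n%:R + 1 = (n%:R + 1) + n%:R :> R by ring.
apply: lerD.
  apply: job_completion_le => [|i _]; first by rewrite addr_ge0.
  by rewrite completion_phase eqxx lerD2l w0_le1.
apply: (le_trans (y := \sum_(j < n) (1 : R))); last by rewrite sumr_const card_ord.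
rewrite big_mkcond ler_sum // => j _; case: ifPn => // hj; rewrite mul1r.
by apply: job_completion_le => // i _; rewrite completion_phase (negbTE hj) add0r.
Qed.

Lemma smith_order_split_first sigma : smith_order I sigma ->
  forall j, j != split_job -> (sigma split_job < sigma j)%N.
Proof.
move=> hsm j hj; apply: hsm.
rewrite !total_work_gap eqxx (negbTE hj) /= divr1 invrK; lra.
Qed.

Lemma le_job_completion_smith sigma (T : schedule I) :
  smith_order I sigma -> feasible beta T -> respects_order sigma T ->
  forall j, n%:R <= job_completion T j.
Proof.
move=> hsm fT oT j; have [->|hj] := eqVneq j split_job.
  exact: le_job_completion_split.
case: fT => s_gt0 _ rel _ _.
have hjj : @has_task R n I j j by rewrite has_task_gap eqxx orbT.
have hjs : @has_task R n I j split_job by rewrite has_task_gap eqxx.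
apply: (le_trans _ (start_le_job_completion hjj (work_gap_ge0 _ _) (s_gt0 _ _ hjj))).
apply: (le_trans _ (oT _ _ _ hjs hjj (smith_order_split_first hsm hj))).
apply: (le_trans _ (start_le_completion (work_gap_ge0 _ _) (s_gt0 _ _ hjs))).
by have := rel _ _ hjs; rewrite release_gap eqxx.
Qed.

Lemma OPT_restricted_gap sigma : smith_order I sigma ->
  n%:R * n%:R <= OPT_restricted beta I sigma.
Proof.
move=> hsm; pose S := phase_schedule n%:R (n%:R + w0).
have fS : feasible beta S.
  by apply: feasible_phase => //; right.
have oS : respects_order sigma S.
  move=> i j j'; rewrite !has_task_gap !completion_phase /=.
  have [->|hj] := eqVneq j split_job; have [->|hj'] := eqVneq j' split_job => //=.
  + by rewrite ltnn.
  + by move=> _ _ /(ltn_trans (smith_order_split_first hsm hj)); rewrite ltnn.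
  + by move=> /eqP ij /eqP ij'; rewrite -ij ij' ltnn.
apply: (le_OPT_restricted fS oS) => T fT oT.
by apply: objective_unit_weight_ge => [j //|]; exact: le_job_completion_smith hsm fT oT.
Qed.

End SmithGap.

Theorem proposition4 (R : realType) (beta : R) (hbeta : 1 < beta) :
  exists (c : R) (N : nat) (I : forall n : nat, instance R n),
    0 < c /\
    forall n : nat, (N <= n)%N ->
      [/\ valid_instance (I n),
          0 < OPT beta (I n)
        & forall sigma : {perm 'I_n}, smith_order (I n) sigma ->
            c * n%:R * OPT beta (I n) <= OPT_restricted beta (I n) sigma].
Proof.
exists 3^-1, 1%N, (smith_gap_instance R); split => [|n n_gt0].
  by rewrite invr_gt0.
have /andP[OPT_ge OPT_le] := OPT_gap_bounds beta n_gt0.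
have n_ge1 : 1 <= n%:R :> R by rewrite ler1n.
split=> [||sigma hsm]; [exact: valid_gap | lra |].
apply: (le_trans _ (OPT_restricted_gap beta n_gt0 hsm)).
have : 3^-1 * n%:R * OPT beta (smith_gap_instance R n) <= 3^-1 * n%:R * (2 * n%:R + 1).
  by rewrite ler_wpM2l // mulr_ge0 // ltW.
nra.
Qed.
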